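(* Let $T$ be a tree with exactly three pendant vertices and major vertex $m$. Then $1$ is an eigenvalue of $L(T)$ if and only if one of the following holds: (1) there are two distinct pendant vertices $u_1,u_2$ with $d(u_1,m)\equiv d(u_2,m)\equiv 1\pmod 3$; or (2) the pendant vertices can be labelled $u_1,u_2,u_3$ so that $d(u_1,m)\equiv 2$, $d(u_2,m)\equiv 0$ and $d(u_3,m)\equiv 0\pmod 3$.
   Context: $L(T)=D(T)-A(T)$ is the Laplacian matrix of $T$. A pendant vertex has degree $1$; a major vertex has degree at least $3$. $d$ denotes distance. *)

From HB Require Import structures.
From mathcomp Require Import all_boot all_order all_algebra.
Set Implicit Arguments. Unset Strict Implicit. Unset Printing Implicit Defensive.
Import Order.TTheory GRing.Theory Num.Theory.

Definition simple_graph (n : nat) (e : rel 'I_n) : Prop :=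
  symmetric e /\ irreflexive e.

Definition connected_graph (n : nat) (e : rel 'I_n) : Prop :=
  forall x y : 'I_n, connect e x y.

Definition acyclic_graph (n : nat) (e : rel 'I_n) : Prop :=
  forall c : seq 'I_n, 3 <= size c -> ~~ ucycleb e c.

Definition is_tree (n : nat) (e : rel 'I_n) : Prop :=
  [/\ simple_graph e, connected_graph e & acyclic_graph e].

Definition deg (n : nat) (e : rel 'I_n) (x : 'I_n) : nat := #|[set y | e x y]|.

Definition pendant (n : nat) (e : rel 'I_n) (x : 'I_n) : bool := deg e x == 1.
Definition major (n : nat) (e : rel 'I_n) (x : 'I_n) : bool := 3 <= deg e x.

Definition walk_of_length (n : nat) (e : rel 'I_n) (k : nat) (x y : 'I_n) : bool :=
  [exists p : k.-tuple 'I_n, path e x p && (last x p == y)].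

(* Graph distance: the least k (<= n) such that there is a walk of length k
   from x to y (the shortest walk is a path).  Equals n.+1 if unreachable,
   which cannot happen in a connected graph. *)
Definition dist (n : nat) (e : rel 'I_n) (x y : 'I_n) : nat :=
  find (fun k => walk_of_length e k x y) (iota 0 n.+1).

Local Open Scope ring_scope.

Definition degree_mx (R : nzRingType) (n : nat) (e : rel 'I_n) : 'M[R]_n :=
  \matrix_(i, j) (if i == j then (deg e i)%:R else 0).

Definition adjacency_mx (R : nzRingType) (n : nat) (e : rel 'I_n) : 'M[R]_n :=
  \matrix_(i, j) (if e i j then 1 else 0).

Definition laplacian (R : nzRingType) (n : nat) (e : rel 'I_n) : 'M[R]_n :=
  degree_mx R e - adjacency_mx R e.

From HB Require Import structures.
From mathcomp Require Import all_boot all_order all_algebra.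
From mathcomp Require Import zify lra.

(* Root the tree at m.  Following the three children of m down to leaves gives three
   distinct pendant vertices, so no other vertex has two children: T is m together with three
   paths.  If x L = x, the equation at a vertex v of degree 2 with parent p and child w reads
   x_w = x_v - x_p, so on the branch through the child c of m the value at depth k is
   leg x_m x_c k, where leg a b satisfies leg_(k+2) = leg_(k+1) - leg_k and hence
   leg_(k+3) = - leg_k.  The equation at a pendant vertex u says leg_(d(u,m)-1) = 0, which only
   depends on d(u,m) mod 3, and the equation at m says 2 x_m = x_c1 + x_c2 + x_c3.  Conversely
   every solution of these conditions propagates along the branches to an eigenvector, and the
   resulting small linear system has a nonzero solution exactly in the two stated cases. *)

Set Implicit Arguments. Unset Strict Implicit. Unset Printing Implicit Defensive.
Import Order.TTheory GRing.Theory Num.Theory.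

Lemma walk_of_lengthP n (e : rel 'I_n) k x y :
  reflect (exists p, [/\ size p = k, path e x p & last x p = y])
    (walk_of_length e k x y).
Proof.
apply: (iffP existsP) => [[p /andP[hp /eqP hl]] | [p [hs hp hl]]].
  by exists (val p); rewrite size_tuple.
have hs' : size p == k by rewrite hs.
by exists (Tuple hs'); rewrite /= hp hl eqxx.
Qed.

Lemma dist_le n (e : rel 'I_n) k x y : walk_of_length e k x y -> dist e x y <= k.
Proof.
rewrite /dist => hw; case: leqP => // hlt.
have hk : k < n.+1.
  apply: leq_trans hlt _.
  by have := find_size (fun k => walk_of_length e k x y) (iota 0 n.+1); rewrite size_iota.
by move: (before_find 0 hlt); rewrite nth_iota // add0n hw.
Qed.

Section ConnectedGraph.
Variables (n : nat) (e : rel 'I_n).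
Hypothesis e_conn : connected_graph e.

Lemma short_walk x y : exists2 k, k < n & walk_of_length e k x y.
Proof.
case/connectP: (e_conn x y) => p hp ->; case: (shortenP hp) => p' hp' hu _.
exists (size p'); last by apply/walk_of_lengthP; exists p'.
by have := max_card (mem (x :: p')); rewrite card_ord (card_uniqP hu).
Qed.

Lemma dist_walk x y : walk_of_length e (dist e x y) x y.
Proof.
case: (short_walk x y) => k hk hw.
have hP : has (fun k => walk_of_length e k x y) (iota 0 n.+1).
  by apply/hasP; exists k; rewrite // mem_iota; lia.
have := nth_find 0 hP; rewrite nth_iota //.
by move: hP; rewrite has_find size_iota.
Qed.

Lemma dist_ltn x y : dist e x y < n.
Proof. by case: (short_walk x y) => k hk /dist_le/leq_ltn_trans->. Qed.

End ConnectedGraph.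

Section LegSequence.
Variable R : zmodType.
Local Open Scope ring_scope.

Fixpoint leg (a b : R) k : R :=
  if k is k'.+1 then (if k' is k''.+1 then leg a b k' - leg a b k'' else b) else a.

Lemma legSS a b k : leg a b k.+2 = leg a b k.+1 - leg a b k.
Proof. by []. Qed.

Lemma leg_zero k : leg 0 0 k = 0.
Proof.
suff: leg 0 0 k = 0 /\ leg 0 0 k.+1 = 0 by case.
by elim: k => [//|k [h1 h2]]; rewrite legSS h1 h2 subr0.
Qed.

Lemma legS3 a b k : leg a b k.+3 = - leg a b k.
Proof. by rewrite legSS [leg _ _ k.+2]legSS addrAC subrr add0r. Qed.

Lemma leg_eq0_mod3 a b k : (leg a b k = 0) <-> (leg a b (k %% 3)%N = 0).
Proof.
elim/ltn_ind: k => k IH; case: (ltnP k 3%N) => hk; first by rewrite modn_small.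
have [i hi] : exists i, k = i.+3 by exists (k - 3)%N; lia.
rewrite hi legS3 -addn3 modnDr -(IH i); last lia.
by split=> h; [rewrite -[LHS]opprK h oppr0 | rewrite h oppr0].
Qed.

Definition leaf_condition (r : nat) (a b : R) : Prop :=
  if r == 1%N then a = 0 else if r == 2%N then b = 0 else b = a.

Lemma leg_pred_eq0 a b k : (0 < k)%N -> (leg a b k.-1 = 0 <-> leaf_condition (k %% 3)%N a b).
Proof.
case: k => // j _; rewrite succnK leg_eq0_mod3 /leaf_condition -[j.+1]addn1 -modnDml.
have := ltn_pmod j (isT : 0 < 3)%N; case: (j %% 3)%N => [|[|[|]]] //= _.
by split=> [/eqP|->]; rewrite ?subr_eq0 ?subrr // => /eqP.
Qed.

End LegSequence.

Section RootedTree.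
Variables (n : nat) (e : rel 'I_n) (m : 'I_n).
Hypotheses (e_sym : symmetric e) (e_irr : irreflexive e).
Hypotheses (e_conn : connected_graph e) (e_acyc : acyclic_graph e).

Local Notation d x := (dist e x m).

Lemma dist_walkP x : exists p, [/\ size p = d x, path e x p & last x p = m].
Proof. exact/walk_of_lengthP/dist_walk. Qed.

Lemma dist_root : d m = 0.
Proof. by apply/eqP; rewrite -leqn0; apply: dist_le; apply/walk_of_lengthP; exists [::]. Qed.

Lemma dist_eq0 x : (d x == 0) = (x == m).
Proof.
apply/eqP/eqP => [hx | ->]; last exact: dist_root.
by case: (dist_walkP x) => p; rewrite hx => -[/size0nil -> _ <-].
Qed.

Lemma dist_gt0 x : (0 < d x) = (x != m).
Proof. by rewrite lt0n dist_eq0. Qed.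

Lemma dist_edge x y : e x y -> d x <= (d y).+1.
Proof.
move=> hxy; case: (dist_walkP y) => p [hs hp hl].
by apply: dist_le; apply/walk_of_lengthP; exists (y :: p); rewrite /= hs hxy hp hl.
Qed.

Lemma walk_dist_lt x p : path e x p -> last x p = m -> {in p, forall y, d y < size p}.
Proof.
elim: p x => [//|z q IH] x /= /andP[hxz hq] hl y.
rewrite inE => /orP[/eqP->|hy].
  by rewrite ltnS; apply: dist_le; apply/walk_of_lengthP; exists q.
exact: leq_trans (IH z hq hl y hy) _.
Qed.

Lemma walk_below_max x y : exists q, [/\ path e x q, last x q = y &
  {in x :: q, forall z, d z <= maxn (d x) (d y)}].
Proof.
case: (dist_walkP x) => p1 [hs1 hp1 hl1].
case: (dist_walkP y) => p2 [hs2 hp2 hl2].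
have hr : path e m (rev (belast y p2)).
  by rewrite -hl2 rev_path (@eq_path _ _ e) // => a b /=; apply: e_sym.
exists (p1 ++ rev (belast y p2)); split.
- by rewrite cat_path hp1 hl1 hr.
- rewrite last_cat hl1; case/lastP: p2 {hs2 hp2 hr} hl2 => [/= -> //| q z _].
  by rewrite belast_rcons rev_cons last_rcons.
move=> z; rewrite inE mem_cat mem_rev => /or3P[/eqP->|hz|hz].
- exact: leq_maxl.
- by apply: leq_trans (ltnW (walk_dist_lt hp1 hl1 hz)) _; rewrite hs1 leq_maxl.
move: (mem_belast hz); rewrite inE => /orP[/eqP->|hz2]; first exact: leq_maxr.
by apply: leq_trans (ltnW (walk_dist_lt hp2 hl2 hz2)) _; rewrite hs2 leq_maxr.
Qed.

Lemma closed_walk_trivial s a w : e s a -> path e a w -> e (last a w) s ->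
  s \notin a :: w -> last a w = a.
Proof.
move=> hsa hw hls hs; apply/eqP; apply: contraT => hne.
case: (shortenP hw) hls hne => p' hp' hu hsub hls hne.
have hsz : 3 <= size (s :: a :: p').
  by case: p' {hp' hu hsub hls} hne => //=; rewrite eqxx.
case/negP: (e_acyc hsz); rewrite /ucycleb /= hsa rcons_path hp' hls /=.
have hsp : s \notin p' by apply: contra hs => /hsub; rewrite inE => ->; rewrite orbT.
by move: hs hu; rewrite !inE !negb_or /= => /andP[-> _] ->; rewrite hsp.
Qed.

Definition parent v := if [pick w | e v w && ((d w).+1 == d v)] is Some w then w else v.

Lemma parent_spec v : v != m -> e v (parent v) /\ (d (parent v)).+1 = d v.
Proof.
move=> hv; rewrite /parent; case: pickP => [w /andP[h1 /eqP h2] //|hn].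
case: (dist_walkP v) => -[|z q] [hs hp hl]; first by move: hv; rewrite -hl eqxx.
move: hp => /= /andP[hvz hq]; move: (hn z); rewrite hvz /= -hs.
have := dist_edge hvz; have : d z <= size q by apply: dist_le; apply/walk_of_lengthP; exists q.
by rewrite -hs /=; lia.
Qed.

Lemma parent_root : parent m = m.
Proof. by rewrite /parent; case: pickP => [w /andP[_ /eqP]|//]; rewrite dist_root. Qed.

Lemma dist_parent v : d (parent v) = (d v).-1.
Proof.
case: (eqVneq v m) => [->|hv]; first by rewrite parent_root dist_root.
by case: (parent_spec hv) => _ <-.
Qed.

Lemma parent_uniq v w : e v w -> (d w).+1 = d v -> w = parent v.
Proof.
move=> hvw hd; have hv : v != m by rewrite -dist_gt0 -hd.
case: (parent_spec hv) => hvp hdp; apply/eqP; apply: contraT => hne.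
case: (walk_below_max w (parent v)) => q [hq hql hb].
have hdp' : d (parent v) = d w by apply: succn_inj; rewrite hdp hd.
have hvq : v \notin w :: q by apply/negP => /hb; rewrite hdp' maxnn -hd ltnn.
have := closed_walk_trivial hvw hq; rewrite hql e_sym => /(_ hvp hvq) hpw.
by rewrite hpw eqxx in hne.
Qed.

Lemma edge_parent v w : e v w -> w = parent v \/ v = parent w.
Proof.
move=> hvw; have hwv : e w v by rewrite e_sym.
have h1 := dist_edge hvw; have h2 := dist_edge hwv.
case: (ltngtP (d w) (d v)) => hc.
- by left; apply: parent_uniq => //; apply/eqP; rewrite eqn_leq hc h1.
- by right; apply: parent_uniq => //; apply/eqP; rewrite eqn_leq hc h2.
exfalso; case: (posnP (d v)) => hk.
  have /eqP hvm : v == m by rewrite -dist_eq0 hk.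
  have /eqP hwm : w == m by rewrite -dist_eq0 hc hk.
  by rewrite hvm hwm e_irr in hvw.
have hv : v != m by rewrite -dist_gt0.
have hw : w != m by rewrite -dist_gt0 hc.
case: (parent_spec hv) => hvp hdp; case: (parent_spec hw) => hwp hdw.
case: (walk_below_max (parent w) (parent v)) => q [hq hql hb].
have hvq : v \notin w :: parent w :: q.
  rewrite inE negb_or; apply/andP; split; first by apply: contraTneq hvw => ->; rewrite e_irr.
  by apply/negP => /hb; rewrite leq_max; lia.
have := @closed_walk_trivial v w (parent w :: q) hvw; rewrite /= hwp hq hql e_sym.
by move=> /(_ isT hvp hvq) hpw; move: hdp; rewrite hpw; lia.
Qed.

Definition children v := [set c | e v c && (parent c == v)].

Lemma childrenP v c : c \in children v -> [/\ e v c, parent c = v, c != m & d c = (d v).+1].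
Proof.
rewrite inE => /andP[hvc /eqP hp].
have hc : c != m by apply: contraTneq hvc => hc; rewrite -hp hc parent_root e_irr.
by case: (parent_spec hc); rewrite hp.
Qed.

Lemma parent_notin_children v : parent v \notin children v.
Proof.
apply/negP => /childrenP[_ _ _]; rewrite dist_parent.
by case: (eqVneq v m) => [->|/parent_spec[_ <-]]; rewrite ?dist_root; lia.
Qed.

Lemma neighbours_nonroot v : v != m -> [set y | e v y] = parent v |: children v.
Proof.
move=> hv; case: (parent_spec hv) => hvp _; apply/setP => y; rewrite !inE.
case hy: (e v y) => /=; first by case: (edge_parent hy) => ->; rewrite eqxx ?orbT.
by rewrite orbF; apply/esym/eqP => hyp; rewrite hyp hvp in hy.
Qed.

Lemma neighbours_root : [set y | e m y] = children m.
Proof.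
apply/setP => y; rewrite !inE; case hy: (e m y) => //=.
case: (edge_parent hy) => [|<-]; last by rewrite eqxx.
by rewrite parent_root => hym; rewrite hym e_irr in hy.
Qed.

Lemma deg_nonroot v : v != m -> deg e v = #|children v|.+1.
Proof. by move=> hv; rewrite /deg neighbours_nonroot // cardsU1 parent_notin_children. Qed.

Lemma deg_root : deg e m = #|children m|.
Proof. by rewrite /deg neighbours_root. Qed.

Definition ancestor u j := iter (d u - j) parent u.

Lemma dist_iter_parent i v : d (iter i parent v) = d v - i.
Proof. by elim: i => [|i IH] /=; rewrite ?subn0 // dist_parent IH subnS. Qed.

Lemma dist_ancestor u j : j <= d u -> d (ancestor u j) = j.
Proof. by move=> h; rewrite /ancestor dist_iter_parent; lia. Qed.

Lemma ancestor_ancestor u j k : j <= k -> k <= d u ->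
  ancestor (ancestor u k) j = ancestor u j.
Proof.
by move=> h1 h2; rewrite {1}/ancestor dist_ancestor // -iterD /ancestor; congr iter; lia.
Qed.

Lemma ancestor_dist u : ancestor u (d u) = u.
Proof. by rewrite /ancestor subnn. Qed.

Lemma ancestor0 u : ancestor u 0 = m.
Proof. by apply/eqP; rewrite -dist_eq0 dist_ancestor. Qed.

Lemma parent_ancestor v : 0 < d v -> parent v = ancestor v (d v).-1.
Proof. by move=> h; rewrite /ancestor (_ : d v - (d v).-1 = 1) //; lia. Qed.

Definition branch u := ancestor u 1.

Lemma branch_parent v : 2 <= d v -> branch (parent v) = branch v.
Proof. by move=> h; rewrite parent_ancestor /branch ?ancestor_ancestor //; lia. Qed.

Lemma branch_child v c : c \in children v -> 0 < d v -> branch c = branch v.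
Proof.
case/childrenP => _ hp _ hd hv; rewrite -hp branch_parent //; lia.
Qed.

Lemma branch_in_children u : 0 < d u -> branch u \in children m.
Proof.
move=> hu; have hb : d (branch u) = 1 by rewrite dist_ancestor.
have hp : parent (branch u) = m by rewrite parent_ancestor hb ?ancestor0.
have hbm : branch u != m by rewrite -dist_gt0 hb.
by case: (parent_spec hbm) => he _; rewrite inE hp eqxx andbT e_sym -{1}hp.
Qed.

Lemma dist_children_root c : c \in children m -> d c = 1.
Proof. by case/childrenP => _ _ _; rewrite dist_root. Qed.

Lemma branch_children_root c : c \in children m -> branch c = c.
Proof. by move=> /dist_children_root hd; rewrite /branch -hd ancestor_dist. Qed.

Section ThreePendants.

Hypothesis m_major : major e m.
Hypothesis card_pendant : #|[set u | pendant e u]| = 3.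

Lemma pendant_neq_root u : pendant e u -> u != m.
Proof. by apply: contraTneq => ->; move: m_major; rewrite /major /pendant; lia. Qed.

Lemma exists_leaf_below w : exists u, [&& pendant e u, d w <= d u & ancestor u (d w) == w].
Proof.
suff: forall k w, n - d w <= k ->
    exists u, [&& pendant e u, d w <= d u & ancestor u (d w) == w].
  by move=> /(_ (n - d w) w); apply.
elim=> [|k IH] {}w hk; first by have := dist_ltn e_conn w m; lia.
have [h0 | [c hc]] := set_0Vmem (children w).
  have hw : w != m by apply: contraTneq m_major => hwm; rewrite /major deg_root -hwm h0 cards0.
  by exists w; rewrite /pendant deg_nonroot // h0 cards0 leqnn ancestor_dist !eqxx.
case: (childrenP hc) => _ hp _ hd.
have [u /and3P[hu hdu /eqP hac]] :
    exists u, [&& pendant e u, d c <= d u & ancestor u (d c) == c].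
  by apply: IH; have := dist_ltn e_conn c m; lia.
exists u; rewrite hu /=; apply/andP; split; first lia.
rewrite -(@ancestor_ancestor u (d w) (d c)) ?hac; try lia.
by rewrite /ancestor hd subSnn /= hp.
Qed.

Definition leaf_below w := xchoose (exists_leaf_below w).

Lemma leaf_below_spec w :
  [/\ pendant e (leaf_below w), d w <= d (leaf_below w) & ancestor (leaf_below w) (d w) = w].
Proof. by case/and3P: (xchooseP (exists_leaf_below w)) => h1 h2 /eqP h3. Qed.

Lemma leaf_below_pendant w : pendant e (leaf_below w).
Proof. by case: (leaf_below_spec w). Qed.

Lemma branch_leaf_below a : 0 < d a -> branch (leaf_below a) = branch a.
Proof.
move=> ha; case: (leaf_below_spec a) => _ h1 h2.
by rewrite /branch -(@ancestor_ancestor _ 1 (d a)) // h2.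
Qed.

Lemma leaf_below_inj a b : d a = d b -> leaf_below a = leaf_below b -> a = b.
Proof.
move=> hd hab; case: (leaf_below_spec a) => _ _ <-.
by case: (leaf_below_spec b) => _ _ <-; rewrite hd hab.
Qed.

Lemma leaf_below_inj_children_root : {in children m &, injective leaf_below}.
Proof. by move=> a b ha hb; apply: leaf_below_inj; rewrite !dist_children_root. Qed.

Lemma leaf_below_sub_pendant : [set leaf_below c | c in children m] \subset [set u | pendant e u].
Proof. by apply/subsetP => _ /imsetP[c _ ->]; rewrite inE leaf_below_pendant. Qed.

Lemma card_children_root : #|children m| = 3.
Proof.
apply/eqP; rewrite eqn_leq -{2}deg_root [_ <= deg e m]m_major andbT -card_pendant.
by rewrite -(card_in_imset leaf_below_inj_children_root) subset_leq_card ?leaf_below_sub_pendant.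
Qed.

Lemma image_leaf_below : [set leaf_below c | c in children m] = [set u | pendant e u].
Proof.
apply/eqP; rewrite eqEcard leaf_below_sub_pendant (card_in_imset leaf_below_inj_children_root).
by rewrite card_children_root card_pendant.
Qed.

Lemma pendant_branch u : pendant e u -> branch u \in children m /\ leaf_below (branch u) = u.
Proof.
move=> hu; have : u \in [set u | pendant e u] by rewrite inE.
rewrite -image_leaf_below => /imsetP[c hc ->].
by rewrite branch_leaf_below ?branch_children_root ?dist_children_root.
Qed.

Lemma card_children_le1 v : v != m -> #|children v| <= 1.
Proof.
move=> hv; apply/card_le1_eqP => c1 c2 h1 h2.
have hb c : c \in children v -> leaf_below c = leaf_below (branch v).
  move=> hc; case/childrenP: (hc) => _ _ _ hdc.
  rewrite -(pendant_branch (leaf_below_pendant c)).2 branch_leaf_below ?hdc //.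
  by rewrite (branch_child hc) // dist_gt0.
apply: leaf_below_inj; last by rewrite !hb.
by case/childrenP: h1 => _ _ _ ->; case/childrenP: h2 => _ _ _ ->.
Qed.

Lemma children_pendant u : pendant e u -> children u = set0.
Proof.
move=> hu; move: (hu); rewrite /pendant deg_nonroot ?pendant_neq_root //.
by rewrite eqSS cards_eq0 => /eqP.
Qed.

Lemma neighbours_pendant u : pendant e u -> [set y | e u y] = [set parent u].
Proof.
by move=> hu; rewrite neighbours_nonroot ?pendant_neq_root // children_pendant // setU0.
Qed.

Lemma children_parent v : 2 <= d v -> children (parent v) = [set v].
Proof.
move=> hv; have hp : parent v != m by rewrite -dist_gt0 dist_parent; lia.
have hvm : v != m by rewrite -dist_gt0; lia.
have hvc : v \in children (parent v).
  by case: (parent_spec hvm) => hvp _; rewrite inE e_sym hvp eqxx.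
apply/eqP; rewrite eq_sym eqEcard sub1set hvc cards1 card_children_le1 //.
Qed.

Lemma neighbours_parent v : 2 <= d v ->
  [set y | e (parent v) y] = [set parent (parent v); v].
Proof.
move=> hv; rewrite neighbours_nonroot ?children_parent //.
by rewrite -dist_gt0 dist_parent; lia.
Qed.

Lemma deg_parent v : 2 <= d v -> deg e (parent v) = 2.
Proof.
move=> hv; rewrite deg_nonroot ?children_parent ?cards1 //.
by rewrite -dist_gt0 dist_parent; lia.
Qed.

Lemma inner_vertex_parent j : j != m -> ~~ pendant e j -> exists2 w, 2 <= d w & j = parent w.
Proof.
move=> hj; rewrite /pendant deg_nonroot // eqSS cards_eq0 => /set0Pn[w hw].
by case/childrenP: hw => _ hp _ hd; exists w; rewrite // hd ltnS dist_gt0.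
Qed.

Variable R : realFieldType.
Local Open Scope ring_scope.

Lemma row_mulmx_laplacian (x : 'rV[R]_n) j :
  (x *m laplacian R e) 0 j = x 0 j *+ deg e j - \sum_(i in [set y | e j y]) x 0 i.
Proof.
rewrite !mxE; under eq_bigr => i _ do rewrite /laplacian !mxE mulrBr.
rewrite sumrB (bigD1 j) //= eqxx mulr_natr big1 ?addr0; last first.
  by move=> i /negbTE ->; rewrite mulr0.
congr (_ - _); rewrite [RHS]big_mkcond /=; apply: eq_bigr => i _; rewrite inE e_sym.
by case: (e j i); rewrite ?mulr1 ?mulr0.
Qed.

Lemma eigen_root (x : 'rV[R]_n) :
  (x *m laplacian R e) 0 m = x 0 m <-> x 0 m *+ 2 = \sum_(c in children m) x 0 c.
Proof.
rewrite row_mulmx_laplacian deg_root card_children_root neighbours_root.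
by split=> h; lra.
Qed.

Lemma eigen_pendant (x : 'rV[R]_n) u : pendant e u ->
  ((x *m laplacian R e) 0 u = x 0 u <-> x 0 (parent u) = 0).
Proof.
move=> hu; rewrite row_mulmx_laplacian neighbours_pendant // big_set1 (eqP hu).
by split=> h; lra.
Qed.

Lemma eigen_parent (x : 'rV[R]_n) v : (2 <= d v)%N ->
  ((x *m laplacian R e) 0 (parent v) = x 0 (parent v) <->
   x 0 v = x 0 (parent v) - x 0 (parent (parent v))).
Proof.
move=> hv; rewrite row_mulmx_laplacian deg_parent // neighbours_parent //.
rewrite big_setU1 ?big_set1 /=; first by split=> h; lra.
by rewrite inE; apply/eqP => /(congr1 (fun y => d y)); rewrite !dist_parent; lia.
Qed.

Lemma leg_branch_parent a (b : 'I_n -> R) v : (0 < d v)%N ->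
  leg a (b (branch (parent v))) (d (parent v)) = leg a (b (branch v)) (d v).-1.
Proof.
move=> hv; case: (ltnP 1 (d v)) => h; first by rewrite branch_parent // dist_parent.
have /eqP -> : parent v == m by rewrite -dist_eq0 dist_parent; lia.
by rewrite dist_root (_ : (d v).-1 = 0%N) //; lia.
Qed.

Lemma leg_recurrence a (b : 'I_n -> R) v : (2 <= d v)%N ->
  leg a (b (branch v)) (d v) = leg a (b (branch (parent v))) (d (parent v))
                             - leg a (b (branch (parent (parent v)))) (d (parent (parent v))).
Proof.
move=> hv; rewrite (leg_branch_parent a b (v := parent v)); last by rewrite dist_parent; lia.
by rewrite branch_parent // dist_parent; case: (d v) hv => [|[|k]].
Qed.

Lemma eigenvector_leg (x : 'rV[R]_n) : x *m laplacian R e = x ->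
  forall v, x 0 v = leg (x 0 m) (x 0 (branch v)) (d v).
Proof.
move=> hx; suff key k v : d v = k -> x 0 v = leg (x 0 m) (x 0 (branch v)) (d v).
  by move=> v; apply: key.
elim/ltn_ind: k v => k IH v hk.
have [hv1 | hv2] := leqP (d v) 1%N.
  case: (posnP (d v)) => h0.
    have /eqP -> : v == m by rewrite -dist_eq0 h0.
    by rewrite dist_root.
  have h1 : d v = 1%N by lia.
  by rewrite /branch -[X in ancestor v X]h1 ancestor_dist h1.
rewrite ((eigen_parent x hv2).1 _) ?hx // leg_recurrence //.
by rewrite (IH _ _ (parent v) erefl) ?(IH _ _ (parent (parent v)) erefl) ?dist_parent //; lia.
Qed.

Lemma sum_pendant_branch (f : 'I_n -> R) :
  \sum_(u | pendant e u) f (branch u) = \sum_(c in children m) f c.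
Proof.
rewrite (eq_bigl (mem [set u | pendant e u])); last by move=> u; rewrite !inE.
rewrite -image_leaf_below big_imset /=; last exact: leaf_below_inj_children_root.
by apply: eq_bigr => c hc; rewrite branch_leaf_below ?dist_children_root ?branch_children_root.
Qed.

Lemma eigenvector_leaf_conditions (x : 'rV[R]_n) : x *m laplacian R e = x -> x != 0 ->
  [/\ x 0 m != 0 \/ (exists2 u, pendant e u & x 0 (branch u) != 0),
      x 0 m *+ 2 = \sum_(u | pendant e u) x 0 (branch u) &
      forall u, pendant e u -> leaf_condition (d u %% 3)%N (x 0 m) (x 0 (branch u))].
Proof.
move=> hx hx0; have hleg := eigenvector_leg hx; split.
- case: (eqVneq (x 0 m) 0) => [ha|]; [right | by left].
  have /existsP[u /andP[hu hxu]] : [exists u, pendant e u && (x 0 (branch u) != 0)].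
    apply: contraNT hx0 => /existsPn hno; apply/eqP/rowP => v; rewrite mxE hleg ha.
    case: (posnP (d v)) => [-> //|hv]; have hbv := branch_in_children hv.
    move: (hno (leaf_below (branch v))); rewrite leaf_below_pendant negbK.
    rewrite branch_leaf_below ?(dist_children_root hbv) // (branch_children_root hbv).
    by move=> /eqP ->; apply: leg_zero.
  by exists u.
- by rewrite sum_pendant_branch; apply/eigen_root; rewrite hx.
move=> u hu; have hdu : (0 < d u)%N by rewrite dist_gt0 pendant_neq_root.
apply/leg_pred_eq0 => //; rewrite -(leg_branch_parent _ (x 0)) // -hleg.
by apply/(eigen_pendant x hu); rewrite hx.
Qed.

Lemma leaf_conditions_eigenvalue a (b : 'I_n -> R) :
  a != 0 \/ (exists2 u, pendant e u & b u != 0) ->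
  a *+ 2 = \sum_(u | pendant e u) b u ->
  (forall u, pendant e u -> leaf_condition (d u %% 3)%N a (b u)) ->
  eigenvalue (laplacian R e) 1.
Proof.
move=> hnz hsum hcond; pose b' c := b (leaf_below c).
pose x := \row_j leg a (b' (branch j)) (d j) : 'rV[R]_n.
have hx j : x 0 j = leg a (b' (branch j)) (d j) by rewrite mxE.
have hxm : x 0 m = a by rewrite hx dist_root.
have hxb u : pendant e u -> x 0 (branch u) = b u.
  move=> hu; have [hbu hlb] := pendant_branch hu.
  by rewrite hx branch_children_root // /b' hlb dist_children_root.
apply/eigenvalueP; exists x; last first.
  case: hnz => [ha | [u hu hbu]]; [apply: contraNneq ha | apply: contraNneq hbu] => hx0.
    by rewrite -hxm hx0 mxE.
  by rewrite -hxb // hx0 mxE.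
rewrite scale1r; apply/rowP => j; have [-> | hj] := eqVneq j m.
  apply/eigen_root; rewrite hxm hsum -sum_pendant_branch.
  by apply: eq_bigr => u hu; rewrite hxb.
have [hp | hnp] := boolP (pendant e j).
  have hdj : (0 < d j)%N by rewrite dist_gt0.
  apply/(eigen_pendant x hp); rewrite hx leg_branch_parent // /b' (pendant_branch hp).2.
  exact/leg_pred_eq0/hcond.
case: (inner_vertex_parent hj hnp) => w hw ->.
by apply/(eigen_parent x hw); rewrite !hx; apply: leg_recurrence.
Qed.

Lemma eigenvalue1_leaf_conditions : eigenvalue (laplacian R e) 1 <->
  exists a (b : 'I_n -> R), [/\ a != 0 \/ (exists2 u, pendant e u & b u != 0),
    a *+ 2 = \sum_(u | pendant e u) b u &
    forall u, pendant e u -> leaf_condition (d u %% 3)%N a (b u)].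
Proof.
split=> [/eigenvalueP[x] | [a [b [hnz hsum hcond]]]].
  rewrite scale1r => hx hx0; exists (x 0 m), (fun u => x 0 (branch u)).
  exact: eigenvector_leaf_conditions.
exact: leaf_conditions_eigenvalue hsum hcond.
Qed.

End ThreePendants.

End RootedTree.

Section ThreeLeaves.
Local Open Scope ring_scope.

Lemma mem3_card (T : finType) (P : pred T) u1 u2 u3 : #|P| = 3%N ->
  [&& u1 != u2, u1 != u3 & u2 != u3] -> [&& P u1, P u2 & P u3] ->
  forall u, P u = (u \in [:: u1; u2; u3]).
Proof.
move=> hP hne /and3P[h1 h2 h3].
have hu : uniq [:: u1; u2; u3] by rewrite /= !inE !negb_or andbT -andbA.
have hc : #|[:: u1; u2; u3]| = #|P| by rewrite hP (card_uniqP hu).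
have /(subset_cardP hc) heq : [:: u1; u2; u3] \subset P.
  by apply/subsetP => u; rewrite !inE => /or3P[] /eqP->.
by move=> u; rewrite heq.
Qed.

Lemma enum_card3 (T : finType) (P : pred T) : #|P| = 3%N ->
  exists u1 u2 u3,
    [&& u1 != u2, u1 != u3 & u2 != u3] /\ forall u, P u = (u \in [:: u1; u2; u3]).
Proof.
rewrite cardE; have := enum_uniq P; have := mem_enum P.
case: (enum P) => [|u1 [|u2 [|u3 [|]]]] // hmem hu _.
exists u1, u2, u3; split; last by move=> u; rewrite hmem.
by move: hu; rewrite /= !inE !negb_or andbT -andbA.
Qed.

Lemma sum_mem3 (V : nmodType) (T : finType) (P : pred T) (F : T -> V) u1 u2 u3 :
  [&& u1 != u2, u1 != u3 & u2 != u3] -> (forall u, P u = (u \in [:: u1; u2; u3])) ->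
  \sum_(u | P u) F u = F u1 + F u2 + F u3.
Proof.
move=> hne hP; rewrite (eq_bigl (mem [:: u1; u2; u3])) => [|u]; last exact: hP.
by rewrite -big_uniq /= ?big_cons ?big_nil ?addr0 ?addrA // !inE !negb_or andbT -andbA.
Qed.

Variable R : realFieldType.

Lemma leaf_condition0 r : leaf_condition r (0 : R) 0.
Proof. by rewrite /leaf_condition !if_same. Qed.

Lemma sum_indicator (T : finType) (P : pred T) v : P v ->
  \sum_(u | P u) ((u == v)%:R : R) = 1.
Proof. by move=> hv; rewrite (bigD1 v) //= eqxx big1 ?addr0 // => u /andP[_ /negbTE->]. Qed.

Lemma leaf_residues (a b1 b2 b3 : R) (r1 r2 r3 : nat) :
  (r1 < 3)%N -> (r2 < 3)%N -> (r3 < 3)%N ->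
  [\/ a != 0, b1 != 0, b2 != 0 | b3 != 0] -> a *+ 2 = b1 + b2 + b3 ->
  leaf_condition r1 a b1 -> leaf_condition r2 a b2 -> leaf_condition r3 a b3 ->
  [|| (r1 == 1) && (r2 == 1), (r1 == 1) && (r3 == 1) | (r2 == 1) && (r3 == 1)]%N ||
  [|| [&& r1 == 2, r2 == 0 & r3 == 0], [&& r2 == 2, r1 == 0 & r3 == 0]
    | [&& r3 == 2, r1 == 0 & r2 == 0]]%N.
Proof.
rewrite mulr2n; case: r1 => [|[|[|r1]]] // _; case: r2 => [|[|[|r2]]] // _;
  case: r3 => [|[|[|r3]]] // _ nz hs; rewrite /leaf_condition /= => c1 c2 c3 //;
  by case: nz => /eqP; lra.
Qed.

Lemma residues_of_leaf_solution (T : finType) (P : pred T) (r : T -> nat) a (b : T -> R) :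
  #|P| = 3%N -> (forall u, r u < 3)%N ->
  a != 0 \/ (exists2 u, P u & b u != 0) -> a *+ 2 = \sum_(u | P u) b u ->
  (forall u, P u -> leaf_condition (r u) a (b u)) ->
  (exists u1 u2, [/\ u1 != u2, P u1, P u2, r u1 = 1%N & r u2 = 1%N]) \/
  (exists u1 u2 u3, [/\ [&& u1 != u2, u1 != u3 & u2 != u3], [&& P u1, P u2 & P u3],
                        r u1 = 2%N, r u2 = 0%N & r u3 = 0%N]).
Proof.
move=> hP hr hnz hsum hcond; have [u1 [u2 [u3 [hne hPu]]]] := enum_card3 hP.
have [hp1 hp2 hp3] : [/\ P u1, P u2 & P u3] by rewrite !hPu !inE !eqxx ?orbT.
move: hsum; rewrite (sum_mem3 _ hne hPu) => hsum.
have hnz3 : [\/ a != 0, b u1 != 0, b u2 != 0 | b u3 != 0].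
  case: hnz => [ha | [u]]; first exact: Or41.
  by rewrite hPu !inE => /or3P[] /eqP -> hb; [apply: Or42 | apply: Or43 | apply: Or44].
case/and3P: (hne) => h12 h13 h23.
have := leaf_residues (hr u1) (hr u2) (hr u3) hnz3 hsum
  (hcond _ hp1) (hcond _ hp2) (hcond _ hp3).
case/orP.
  by case/or3P => /andP[/eqP g1 /eqP g2]; left;
    [exists u1, u2 | exists u1, u3 | exists u2, u3]; split.
case/or3P => /and3P[/eqP g1 /eqP g2 /eqP g3]; right.
- by exists u1, u2, u3; rewrite hne hp1 hp2 hp3; split.
- by exists u2, u1, u3; rewrite eq_sym h12 h23 h13 hp1 hp2 hp3; split.
- by exists u3, u1, u2; rewrite eq_sym h13 (eq_sym u3) h23 h12 hp1 hp2 hp3; split.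
Qed.

Lemma leaf_solution_of_residues (T : finType) (P : pred T) (r : T -> nat) :
  #|P| = 3%N ->
  (exists u1 u2, [/\ u1 != u2, P u1, P u2, r u1 = 1%N & r u2 = 1%N]) \/
  (exists u1 u2 u3, [/\ [&& u1 != u2, u1 != u3 & u2 != u3], [&& P u1, P u2 & P u3],
                        r u1 = 2%N, r u2 = 0%N & r u3 = 0%N]) ->
  exists a (b : T -> R), [/\ a != 0 \/ (exists2 u, P u & b u != 0),
    a *+ 2 = \sum_(u | P u) b u & forall u, P u -> leaf_condition (r u) a (b u)].
Proof.
move=> hP [[u1 [u2 [h12 hp1 hp2 hr1 hr2]]] | [u1 [u2 [u3 [hne hps hr1 hr2 hr3]]]]].
  exists 0, (fun u => (u == u1)%:R - (u == u2)%:R); split.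
  - by right; exists u1; rewrite // eqxx (negbTE h12) subr0 oner_eq0.
  - by rewrite mul0rn sumrB !sum_indicator // subrr.
  move=> u hu; have [-> //|hr] := eqVneq (r u) 1%N.
  have /negbTE-> : u != u1 by apply: contraNneq hr => ->; rewrite hr1.
  have /negbTE-> : u != u2 by apply: contraNneq hr => ->; rewrite hr2.
  by rewrite subrr; apply: leaf_condition0.
have hPu := mem3_card hP hne hps.
exists 1, (fun u => (r u == 0%N)%:R); split.
- by left; apply: oner_neq0.
- by rewrite (sum_mem3 _ hne hPu) hr1 hr2 hr3 /= add0r mulr2n.
by move=> u; rewrite hPu !inE => /or3P[] /eqP->; rewrite /leaf_condition ?hr1 ?hr2 ?hr3.
Qed.

End ThreeLeaves.

(* Otherwise n would become implicit in mainTheorem9, unlike in its statement. *)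
Unset Implicit Arguments.

Theorem mainTheorem9 (R : realFieldType) (n : nat) (e : rel 'I_n) (m : 'I_n) :
  is_tree e ->
  #|[set u | pendant e u]| = 3 ->
  major e m ->
  (eigenvalue (laplacian R e) 1%R <->
   ((exists u1 u2 : 'I_n,
       [/\ u1 != u2, pendant e u1, pendant e u2,
           dist e u1 m %% 3 = 1 & dist e u2 m %% 3 = 1]) \/
    (exists u1 u2 u3 : 'I_n,
       [/\ [&& u1 != u2, u1 != u3 & u2 != u3],
           [&& pendant e u1, pendant e u2 & pendant e u3],
           dist e u1 m %% 3 = 2, dist e u2 m %% 3 = 0 & dist e u3 m %% 3 = 0]))).
Proof.
case=> [[e_sym e_irr] e_conn e_acyc] hcard hmaj.
have card_pendant : #|pendant e| = 3 by rewrite -hcard; apply: eq_card => u; rewrite inE.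
rewrite (eigenvalue1_leaf_conditions e_sym e_irr e_conn e_acyc hmaj hcard).
split=> [[a [b [hnz hsum hcond]]] | hres]; last exact: leaf_solution_of_residues.
by apply: residues_of_leaf_solution hnz hsum hcond => // u; apply: ltn_pmod.
Qed.
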